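(* Let $t\ge0$, $R>1$, and let $h$ be a minimizer of $E$ over $\mathcal A_h$ satisfying $h(r)\ge\frac23$ for all $r\in[1,R]$. Then for every $x$ with $1\le|x|\le R$ (where the frame $(\mathbf n,\mathbf m,\mathbf p)$ is defined) and every $\mathbf W\in S_0$, \[ \psi(\mathbf W)+\frac{3h(|x|)}{8}\left(2\,\mathbf E_0\cdot\mathbf W+|\mathbf W|^2\right)^2\ge0, \] where $\mathbf E_0=\sqrt{3/2}\,(\hat x\otimes\hat x-\mathbf I/3)$.
   Context: $S_0$: real symmetric traceless $3\times3$ matrices; $\mathbf A\cdot\mathbf B=A_{ij}B_{ij}$, $|\mathbf W|^2=\mathbf W\cdot\mathbf W$. $h_+=\frac{3+\sqrt{9+8t}}{4}$; $E[h]=\int_1^R\frac{r^2}{2}(h')^2+3h^2+r^2[\frac t8(1-h^2)^2+\frac{h_+}{8}(1+3h^4-4h^3)]dr$ on $\mathcal A_h=\{h\in L^2(1,R): h'\in L^2((1,R);r^2dr),\ h(1)=h(R)=1\}$. For $x$ with spherical coordinates $(r,\theta,\phi)$: $\mathbf n=\hat x=(\sin\theta\cos\phi,\sin\theta\sin\phi,\cos\theta)$, $\mathbf m=(\cos\theta\cos\phi,\cos\theta\sin\phi,-\sin\theta)$, $\mathbf p=(-\sin\phi,\cos\phi,0)$. Put $\mathbf E=\mathbf n\otimes\mathbf n-\mathbf I/3$, $\mathbf F=\mathbf n\otimes\mathbf m+\mathbf m\otimes\mathbf n$, $\mathbf G=\mathbf n\otimes\mathbf p+\mathbf p\otimes\mathbf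 n$, $\mathbf X=\mathbf m\otimes\mathbf p+\mathbf p\otimes\mathbf m$, $\mathbf Y=\mathbf m\otimes\mathbf m-\mathbf p\otimes\mathbf p$, and write $\mathbf W=w_0\mathbf E+w_1\mathbf F+w_2\mathbf G+w_3\mathbf X+w_4\mathbf Y$. Define $\psi(\mathbf W)=-\frac{\sqrt6}{2}\mathrm{tr}\,\mathbf W^3-\frac12w_0^2+\frac92w_3^2+\frac92w_4^2$. *)

From HB Require Import structures.
From mathcomp Require Import all_boot all_order all_algebra.
From mathcomp Require Import all_classical all_reals all_analysis.
Set Implicit Arguments. Unset Strict Implicit. Unset Printing Implicit Defensive.
Import Order.TTheory GRing.Theory Num.Theory.
Import numFieldNormedType.Exports.
Local Open Scope classical_set_scope.
Local Open Scope ring_scope.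

Section Defs.
Variable R : realType.

Definition mdot (A B : 'M[R]_3) : R := \sum_(i < 3) \sum_(j < 3) A i j * B i j.

Definition S0 : set 'M[R]_3 := [set A | A^T = A /\ \tr A = 0].

Definition tens (u v : 'rV[R]_3) : 'M[R]_3 := u^T *m v.

Definition vec3 (a b c : R) : 'rV[R]_3 :=
  \row_(i < 3) (if i == 0 :> nat then a else if i == 1 :> nat then b else c).

Definition nvec (th ph : R) := vec3 (sin th * cos ph) (sin th * sin ph) (cos th).
Definition mvec (th ph : R) := vec3 (cos th * cos ph) (cos th * sin ph) (- sin th).
Definition pvec (th ph : R) := vec3 (- sin ph) (cos ph) 0.

Definition Emat th ph : 'M[R]_3 := tens (nvec th ph) (nvec th ph) - 3^-1 *: 1%:M.
Definition Fmat th ph : 'M[R]_3 := tens (nvec th ph) (mvec th ph) + tens (mvec th ph) (nvec th ph).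
Definition Gmat th ph : 'M[R]_3 := tens (nvec th ph) (pvec th ph) + tens (pvec th ph) (nvec th ph).
Definition Xmat th ph : 'M[R]_3 := tens (mvec th ph) (pvec th ph) + tens (pvec th ph) (mvec th ph).
Definition Ymat th ph : 'M[R]_3 := tens (mvec th ph) (mvec th ph) - tens (pvec th ph) (pvec th ph).

Definition frame_comb th ph (w0 w1 w2 w3 w4 : R) : 'M[R]_3 :=
  w0 *: Emat th ph + w1 *: Fmat th ph + w2 *: Gmat th ph
  + w3 *: Xmat th ph + w4 *: Ymat th ph.

Definition psi (W : 'M[R]_3) (w0 w3 w4 : R) : R :=
  - (Num.sqrt 6 / 2) * \tr (W *m W *m W) - w0 ^+ 2 / 2
  + 9 / 2 * w3 ^+ 2 + 9 / 2 * w4 ^+ 2.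

Definition E0mat th ph : 'M[R]_3 := Num.sqrt (3 / 2) *: Emat th ph.

Definition hplus (t : R) : R := (3 + Num.sqrt (9 + 8 * t)) / 4.

Local Notation mu := (@lebesgue_measure R).

Definition energy_density (t : R) (h dh : R -> R) (r : R) : R :=
  r ^+ 2 / 2 * dh r ^+ 2 + 3 * h r ^+ 2
  + r ^+ 2 * (t / 8 * (1 - h r ^+ 2) ^+ 2
              + hplus t / 8 * (1 + 3 * h r ^+ 4 - 4 * h r ^+ 3)).

Definition energy (t Rb : R) (h dh : R -> R) : \bar R :=
  (\int[mu]_(r in `[1%R, Rb]) (energy_density t h dh r)%:E)%E.

(* h in A_h with weak derivative dh: h in L^2(1,Rb), dh in L^2((1,Rb); r^2 dr),
   h the (absolutely) continuous representative h(x) = h(1) + int_1^x dh,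
   boundary conditions h(1) = h(Rb) = 1. *)
Definition primitive_rep (Rb : R) (h dh : R -> R) : Prop :=
  forall x : R, 1 <= x <= Rb ->
    (\int[mu]_(r in `[1%R, x]) (dh r)%:E)%E = ((h x - h 1)%:E)%E.

Definition admissible (Rb : R) (h dh : R -> R) : Prop :=
  [/\ measurable_fun `[1%R, Rb] h /\ measurable_fun `[1%R, Rb] dh,
      (\int[mu]_(r in `[1%R, Rb]) (h r ^+ 2)%:E < +oo)%E,
      (\int[mu]_(r in `[1%R, Rb]) (r ^+ 2 * dh r ^+ 2)%:E < +oo)%E,
      integrable mu `[1%R, Rb] (EFin \o dh)
    & primitive_rep Rb h dh /\ (h 1 = 1 /\ h Rb = 1)].

Definition is_minimizer (t Rb : R) (h : R -> R) : Prop :=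
  exists dh, admissible Rb h dh /\
    forall g dg, admissible Rb g dg -> (energy t Rb h dh <= energy t Rb g dg)%E.

End Defs.

(* In the moving frame (n, m, p) the matrix W has the coordinate matrix
   M = [[2w0/3, w1, w2], [w1, w4 - w0/3, w3], [w2, w3, -w0/3 - w4]] and E_0 has
   the coordinate matrix of the same shape with w0 replaced by c = sqrt(3/2).
   With N = M + E_0 one has |N|^2 = 1 + 2 E_0.W + |W|^2, and a polynomial
   identity (valid once c^2 = 3/2) gives
     psi(W) + (2 E_0.W + |W|^2)^2 / 4 = - c tr N^3 + |N|^4 / 4 + |N|^2 / 4.
   For a symmetric traceless N, 6 (tr N^3)^2 <= |N|^6 (the discriminant of its
   characteristic polynomial is nonnegative), so c tr N^3 <= |N|^3 / 2 and the
   right-hand side is at least |N|^2 (|N| - 1)^2 / 4 >= 0. Since h >= 2/3 makes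
   the coefficient 3h/8 at least 1/4, the claim follows. *)
From HB Require Import structures.
From mathcomp Require Import all_boot all_order all_algebra.
From mathcomp Require Import all_classical all_reals all_analysis.
From mathcomp Require Import ring lra.
Import Order.TTheory GRing.Theory Num.Theory.
Import numFieldNormedType.Exports.
Set Implicit Arguments. Unset Strict Implicit. Unset Printing Implicit Defensive.
Local Open Scope classical_set_scope.
Local Open Scope ring_scope.

Lemma mxtrace_mul_trmx_ge0 (R : realDomainType) n (A : 'M[R]_n) :
  0 <= \tr (A *m A^T).
Proof.
apply: sumr_ge0 => i _; rewrite mxE; apply: sumr_ge0 => j _.
by rewrite mxE -expr2 sqr_ge0.
Qed.

Section SymTraceless.
Variable R : realFieldType.

Definition sym_traceless (x y d e f : R) : 'M[R]_3 :=
  \matrix_(i < 3, j < 3)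
    match i : nat, j : nat with
    | 0, 0 => x | 1, 1 => y | 2, 2 => - x - y
    | 0, 1 | 1, 0 => d | 0, 2 | 2, 0 => e | _, _ => f
    end.

Lemma trmx_sym_traceless x y d e f :
  (sym_traceless x y d e f)^T = sym_traceless x y d e f.
Proof.
apply/matrixP => i j; rewrite !mxE.
by case: i => [[|[|[|//]]] ?]; case: j => [[|[|[|//]]] ?].
Qed.

(* The 3 x 3 minor, at the index pairs p, q, s, of the 3 x 9 matrix whose rows
   are the entries of 1, A and A^2. *)
Definition power_minor (A : 'M[R]_3) (p q s : 'I_3 * 'I_3) : R :=
  let e l (k : 'I_3 * 'I_3) := (A ^+ l) k.1 k.2 in
  e 0 p * (e 1 q * e 2 s - e 2 q * e 1 s) - e 0 q * (e 1 p * e 2 s - e 2 p * e 1 s)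
  + e 0 s * (e 1 p * e 2 q - e 2 p * e 1 q).

(* Cauchy-Binet for the Gram determinant of 1, A, A^2 under the trace form:
   half the left-hand side is that determinant, i.e. the discriminant of the
   characteristic polynomial. Minors with a repeated off-diagonal position, or
   with three off-diagonal positions, vanish; the weights count the symmetric
   copies of the off-diagonal positions. *)
Lemma sym_traceless_discriminant x y d e f :
  let A := sym_traceless x y d e f in let m := power_minor A in
  \tr (A *m A) ^+ 3 - 6 * \tr (A *m A *m A) ^+ 2 =
  2 * (m (0, 0) (1, 1) (2%:R, 2%:R) ^+ 2
  + 2 * (m (0, 0) (1, 1) (0, 1) ^+ 2 + m (0, 0) (1, 1) (0, 2%:R) ^+ 2
        + m (0, 0) (1, 1) (1, 2%:R) ^+ 2 + m (0, 0) (2%:R, 2%:R) (0, 1) ^+ 2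
        + m (0, 0) (2%:R, 2%:R) (0, 2%:R) ^+ 2 + m (0, 0) (2%:R, 2%:R) (1, 2%:R) ^+ 2
        + m (1, 1) (2%:R, 2%:R) (0, 1) ^+ 2 + m (1, 1) (2%:R, 2%:R) (0, 2%:R) ^+ 2
        + m (1, 1) (2%:R, 2%:R) (1, 2%:R) ^+ 2)
  + 4 * (m (0, 0) (0, 1) (0, 2%:R) ^+ 2 + m (0, 0) (0, 1) (1, 2%:R) ^+ 2
        + m (0, 0) (0, 2%:R) (1, 2%:R) ^+ 2 + m (1, 1) (0, 1) (0, 2%:R) ^+ 2
        + m (1, 1) (0, 1) (1, 2%:R) ^+ 2 + m (1, 1) (0, 2%:R) (1, 2%:R) ^+ 2
        + m (2%:R, 2%:R) (0, 1) (0, 2%:R) ^+ 2 + m (2%:R, 2%:R) (0, 1) (1, 2%:R) ^+ 2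
        + m (2%:R, 2%:R) (0, 2%:R) (1, 2%:R) ^+ 2)).
Proof.
rewrite /= /power_minor /= expr0 expr1 expr2 /mxtrace.
rewrite !(mxE, big_ord_recr, big_ord0) /=.
ring.
Qed.

Lemma sym_traceless_trace_cube_bound x y d e f :
  let A := sym_traceless x y d e f in
  6 * \tr (A *m A *m A) ^+ 2 <= \tr (A *m A) ^+ 3.
Proof.
rewrite /= -subr_ge0 sym_traceless_discriminant.
by repeat (exact: sqr_ge0 || apply: addr_ge0 || apply: mulr_ge0).
Qed.

Definition frame_coords (w0 w1 w2 w3 w4 : R) : 'M[R]_3 :=
  sym_traceless (2 * w0 / 3) (w4 - w0 / 3) w1 w2 w3.

Lemma trmx_frame_coords w0 w1 w2 w3 w4 :
  (frame_coords w0 w1 w2 w3 w4)^T = frame_coords w0 w1 w2 w3 w4.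
Proof. exact: trmx_sym_traceless. Qed.

Lemma frame_coordsE w0 w1 w2 w3 w4 : frame_coords w0 w1 w2 w3 w4 =
  w0 *: (delta_mx 0 0 - 3^-1 *: 1%:M) + w1 *: (delta_mx 0 1 + delta_mx 1 0)
  + w2 *: (delta_mx 0 2%:R + delta_mx 2%:R 0)
  + w3 *: (delta_mx 1 2%:R + delta_mx 2%:R 1)
  + w4 *: (delta_mx 1 1 - delta_mx 2%:R 2%:R).
Proof.
apply/matrixP => i j; rewrite !mxE.
by case: i => [[|[|[|//]]] ?]; case: j => [[|[|[|//]]] ?] /=; field.
Qed.

Lemma frame_coords_dot w0 w1 w2 w3 w4 :
  \tr (frame_coords 1 0 0 0 0 *m (frame_coords w0 w1 w2 w3 w4)^T) = 2 * w0 / 3.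
Proof. by rewrite /mxtrace !(mxE, big_ord_recr, big_ord0) /=; field. Qed.

End SymTraceless.

Section ShiftedEnergy.
Variables (R : rcfType) (c : R).
Hypothesis c2 : c ^+ 2 = 3 / 2.

Lemma trace_quartic_ge0 (T S : R) : 0 <= S -> 6 * T ^+ 2 <= S ^+ 3 ->
  0 <= - c * T + S ^+ 2 / 4 + S / 4.
Proof.
move=> S_ge0 TS; pose r := Num.sqrt S.
have r_ge0 : 0 <= r by apply: sqrtr_ge0.
have rS : r ^+ 2 = S by rewrite sqr_sqrtr.
have cT : c * T <= r ^+ 3 / 2.
  apply: le_trans (ler_norm _) _.
  rewrite -ler_sqr ?nnegrE ?normr_ge0 ?divr_ge0 ?exprn_ge0 //.
  rewrite real_normK ?num_real // exprMn c2 expr_div_n -exprM mulnC exprM rS.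
  lra.
rewrite -rS; have := sqr_ge0 (r * (r - 1)); nra.
Qed.

Lemma frame_energy_shift (w0 w1 w2 w3 w4 : R) :
  let M := frame_coords w0 w1 w2 w3 w4 in
  let N := frame_coords (w0 + c) w1 w2 w3 w4 in
  - c * \tr (M *m M *m M) - w0 ^+ 2 / 2 + 9 / 2 * w3 ^+ 2 + 9 / 2 * w4 ^+ 2
    + (2 * (c * (2 * w0 / 3)) + \tr (M *m M)) ^+ 2 / 4 =
  - c * \tr (N *m N *m N) + \tr (N *m N) ^+ 2 / 4 + \tr (N *m N) / 4.
Proof.
move=> M N; apply/eqP; rewrite -subr_eq0; apply/eqP.
transitivity ((c ^+ 2 - 3 / 2) * (c ^+ 2 / 9 + 2 / 9 * c * w0 + 4 / 9 * w0 ^+ 2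
  + (w1 ^+ 2 + w2 ^+ 2) / 3 - 8 / 3 * (w3 ^+ 2 + w4 ^+ 2))); last first.
  by rewrite c2 subrr mul0r.
rewrite /M /N /frame_coords /mxtrace !(mxE, big_ord_recr, big_ord0) /=.
by field.
Qed.

Lemma frame_energy_ge0 (w0 w1 w2 w3 w4 k : R) :
  let M := frame_coords w0 w1 w2 w3 w4 in
  1 / 4 <= k ->
  0 <= - c * \tr (M *m M *m M) - w0 ^+ 2 / 2 + 9 / 2 * w3 ^+ 2 + 9 / 2 * w4 ^+ 2
    + k * (2 * (c * (2 * w0 / 3)) + \tr (M *m M)) ^+ 2.
Proof.
move=> M k_ge; set X := (_ + _) ^+ 2.
pose N := frame_coords (w0 + c) w1 w2 w3 w4.
have NN_ge0 : 0 <= \tr (N *m N).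
  by rewrite -{2}[N]trmx_frame_coords mxtrace_mul_trmx_ge0.
have := trace_quartic_ge0 NN_ge0 (sym_traceless_trace_cube_bound _ _ _ _ _).
rewrite -frame_energy_shift -/M -/X => X4_ge0.
have : 0 <= X by apply: sqr_ge0.
nra.
Qed.

End ShiftedEnergy.

Section OrthogonalConjugation.
Variables (R : comUnitRingType) (n : nat) (P : 'M[R]_n).
Hypothesis P_orth : P *m P^T = 1%:M.

Lemma orth_conjM (A B : 'M[R]_n) :
  (P^T *m A *m P) *m (P^T *m B *m P) = P^T *m (A *m B) *m P.
Proof. by rewrite !mulmxA -(mulmxA (P^T *m A)) P_orth mulmx1. Qed.

Lemma orth_conj_trace (A : 'M[R]_n) : \tr (P^T *m A *m P) = \tr A.
Proof. by rewrite mxtrace_mulC mulmxA P_orth mul1mx. Qed.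

End OrthogonalConjugation.

Lemma trmx_conj (R : comNzRingType) n (P A : 'M[R]_n) :
  (P^T *m A *m P)^T = P^T *m A^T *m P.
Proof. by rewrite !trmx_mul trmxK mulmxA. Qed.

Section FrobeniusProduct.
Variable R : realType.

Lemma mdotE (A B : 'M[R]_3) : mdot A B = \tr (A *m B^T).
Proof.
apply: eq_bigr => i _; rewrite mxE; apply: eq_bigr => j _.
by rewrite mxE.
Qed.

Lemma mdotZl a (A B : 'M[R]_3) : mdot (a *: A) B = a * mdot A B.
Proof. by rewrite !mdotE -scalemxAl mxtraceZ. Qed.

Lemma mdot_orth_conj (P A B : 'M[R]_3) : P *m P^T = 1%:M ->
  mdot (P^T *m A *m P) (P^T *m B *m P) = mdot A B.
Proof. by move=> P_orth; rewrite !mdotE trmx_conj orth_conjM ?orth_conj_trace. Qed.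

Lemma tens_row (P : 'M[R]_3) a b :
  tens (row a P) (row b P) = P^T *m delta_mx a b *m P.
Proof.
rewrite /tens !rowE trmx_mul trmx_delta -!mulmxA (mulmxA (delta_mx a 0)).
by rewrite mul_delta_mx.
Qed.

End FrobeniusProduct.

Section Frame.
Variables (R : realType) (th ph : R).

Definition frame_mx : 'M[R]_3 := \matrix_(i < 3, j < 3)
  (if i == 0 :> nat then nvec th ph 0 j
   else if i == 1 :> nat then mvec th ph 0 j else pvec th ph 0 j).

Lemma frame_mx_orthogonal : frame_mx *m frame_mx^T = 1%:M.
Proof.
have h1 := cos2Dsin2 th; have h2 := cos2Dsin2 ph.
(* The entries n.m and m.n need this multiple of [h2]; nra does not find it. *)
have h3 : sin th * cos th * (cos ph ^+ 2 + sin ph ^+ 2) = sin th * cos th.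
  by rewrite h2 mulr1.
apply/matrixP => i j; rewrite !mxE !big_ord_recr big_ord0 /= !mxE.
by case: i => [[|[|[|//]]] ?]; case: j => [[|[|[|//]]] ?] /=; nra.
Qed.

Lemma frame_combE w0 w1 w2 w3 w4 : frame_comb th ph w0 w1 w2 w3 w4 =
  frame_mx^T *m frame_coords w0 w1 w2 w3 w4 *m frame_mx.
Proof.
rewrite /frame_comb /Emat /Fmat /Gmat /Xmat /Ymat.
have -> : nvec th ph = row 0 frame_mx by apply/rowP => j; rewrite !mxE.
have -> : mvec th ph = row 1 frame_mx by apply/rowP => j; rewrite !mxE.
have -> : pvec th ph = row 2%:R frame_mx by apply/rowP => j; rewrite !mxE.
rewrite !tens_row frame_coordsE.
rewrite !mulmxDr -!scalemxAr !mulmxDr !mulmxN -scalemxAr mulmx1.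
rewrite !mulmxDl -!scalemxAl !mulmxDl !mulNmx -scalemxAl.
by rewrite (mulmx1C frame_mx_orthogonal).
Qed.

End Frame.

Theorem lemma4p2 (R : realType) (t Rb : R) (h : R -> R) :
  0 <= t -> 1 < Rb ->
  is_minimizer t Rb h ->
  (forall r, 1 <= r <= Rb -> 2 / 3 <= h r) ->
  forall r th ph : R, 1 <= r <= Rb -> 0 < th < pi -> 0 <= ph < 2 * pi ->
  forall (W : 'M[R]_3) (w0 w1 w2 w3 w4 : R),
    S0 W ->
    W = frame_comb th ph w0 w1 w2 w3 w4 ->
    0 <= psi W w0 w3 w4
         + 3 * h r / 8 * (2 * mdot (E0mat th ph) W + mdot W W) ^+ 2.
Proof.
(* The inequality is pointwise: only the bound [h >= 2/3] is used. *)
move=> _ _ _ h_ge r th ph r_in _ _ W w0 w1 w2 w3 w4 _ ->.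
pose P := frame_mx th ph; pose c : R := Num.sqrt (3 / 2).
have P_orth : P *m P^T = 1%:M := frame_mx_orthogonal th ph.
have c2 : c ^+ 2 = 3 / 2 by rewrite sqr_sqrtr // divr_ge0.
have sqrt6E : Num.sqrt 6 / 2 = c.
  have s6 : Num.sqrt 6 ^+ 2 = 6 :> R by rewrite sqr_sqrtr.
  rewrite /c (_ : 3 / 2 = (Num.sqrt 6 / 2) ^+ 2); last by rewrite expr_div_n s6; field.
  by rewrite sqrtr_sqr ger0_norm // divr_ge0 ?sqrtr_ge0.
have EP : Emat th ph = P^T *m frame_coords 1 0 0 0 0 *m P.
  by rewrite -frame_combE /frame_comb scale1r !scale0r !addr0.
have k_ge : 1 / 4 <= 3 * h r / 8 by have := h_ge r r_in; lra.
rewrite /psi /E0mat sqrt6E mdotZl EP frame_combE -/P !mdot_orth_conj //.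
rewrite !orth_conjM // orth_conj_trace // !mdotE frame_coords_dot trmx_frame_coords.
exact: frame_energy_ge0 c2 _ _ _ _ _ _ k_ge.
Qed.
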